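(* Let $\mathcal{X}=({\bm X},m^{\bm X}_\bullet,\nu^{\bm X})$, $\mathcal{Y}=({\bm Y},m^{\bm Y}_\bullet,\nu^{\bm Y})$ be Markov chains on finite sets with $n=|{\bm X}|$, $m=|{\bm Y}|$, $C\in\mathbb{R}_+^{n\times m}$ a cost matrix, $\delta\in(0,1]$ and $\epsilon\ge0$. Then the limit $d^{\delta,(\infty)}_{\mathrm{WL},\epsilon}(\mathcal{X},\mathcal{Y};C):=\lim_{k\to\infty}d^{\delta,(k)}_{\mathrm{WL},\epsilon}(\mathcal{X},\mathcal{Y};C)$ exists, equals $d^\epsilon_{\mathrm W}(\nu^{\bm X},\nu^{\bm Y};C^{\epsilon,\delta,(\infty)})$, and for every $k\in\mathbb{N}$, $$\big|d^{\delta,(k)}_{\mathrm{WL},\epsilon}(\mathcal{X},\mathcal{Y};C)-d^{\delta,(\infty)}_{\mathrm{WL},\epsilon}(\mathcal{X},\mathcal{Y};C)\big|\le\frac{(1-\delta)^k}{\delta}\big(2\|C\|_\infty+\epsilon\log(nm)\big).$$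
   Context: For $\alpha\in\mathcal{P}({\bm X}),\beta\in\mathcal{P}({\bm Y})$, cost $D$ and $\epsilon\ge0$, $d^{\epsilon}_{\mathrm W}(\alpha,\beta;D)=\min_{P\in\mathcal{C}(\alpha,\beta)}\sum_{i,j}P_{ij}D_{ij}+\epsilon\sum_{i,j}P_{ij}\log P_{ij}$, with $\mathcal{C}(\alpha,\beta)$ the set of couplings. Define $C^{\epsilon,\delta,(0)}=C$, $C^{\epsilon,\delta,(l)}_{ij}=\delta C_{ij}+(1-\delta)d^\epsilon_{\mathrm W}(m^{\bm X}_i,m^{\bm Y}_j;C^{\epsilon,\delta,(l-1)})$, and $d^{\delta,(k)}_{\mathrm{WL},\epsilon}(\mathcal{X},\mathcal{Y};C)=d^\epsilon_{\mathrm W}(\nu^{\bm X},\nu^{\bm Y};C^{\epsilon,\delta,(k)})$ for $k\in\mathbb{N}$. $C^{\epsilon,\delta,(\infty)}$ denotes the unique fixed point of $D\mapsto\big(\delta C_{ij}+(1-\delta)d^\epsilon_{\mathrm W}(m^{\bm X}_i,m^{\bm Y}_j;D)\big)_{i,j}$ (equivalently $\lim_k C^{\epsilon,\delta,(k)}$). $\|\cdot\|_\infty$ is the entrywise max norm. *)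

From HB Require Import structures.
From mathcomp Require Import all_boot all_order all_algebra.
From mathcomp Require Import all_classical all_reals all_analysis.
Set Implicit Arguments. Unset Strict Implicit. Unset Printing Implicit Defensive.
Import Order.TTheory GRing.Theory Num.Theory numFieldNormedType.Exports.
Local Open Scope ring_scope.
Local Open Scope classical_set_scope.

Definition prob_vec {R : realType} {T : finType} (a : T -> R) : Prop :=
  (forall x, 0 <= a x) /\ \sum_(x : T) a x = 1.

Definition markov_kernel {R : realType} {T : finType} (mk : T -> T -> R) : Prop :=
  forall x, prob_vec (mk x).

Definition coupling {R : realType} {X Y : finType}
  (a : X -> R) (b : Y -> R) (P : X -> Y -> R) : Prop :=
  (forall x y, 0 <= P x y) /\
  (forall x, \sum_(y : Y) P x y = a x) /\
  (forall y, \sum_(x : X) P x y = b y).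

Definition xlogx {R : realType} (t : R) : R := if t == 0 then 0 else t * ln t.

Definition ot_obj {R : realType} {X Y : finType} (eps : R)
  (D P : X -> Y -> R) : R :=
  \sum_(x : X) \sum_(y : Y) (P x y * D x y + eps * xlogx (P x y)).

Definition dW {R : realType} {X Y : finType} (eps : R)
  (a : X -> R) (b : Y -> R) (D : X -> Y -> R) : R :=
  inf [set v | exists P, coupling a b P /\ v = ot_obj eps D P].

Definition WLmap {R : realType} {X Y : finType} (eps delta : R)
  (mX : X -> X -> R) (mY : Y -> Y -> R) (C D : X -> Y -> R) : X -> Y -> R :=
  fun i j => delta * C i j + (1 - delta) * dW eps (mX i) (mY j) D.

Definition Citer {R : realType} {X Y : finType} (eps delta : R)
  (mX : X -> X -> R) (mY : Y -> Y -> R) (C : X -> Y -> R) (k : nat) : X -> Y -> R :=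
  iter k (WLmap eps delta mX mY C) C.

Definition dWLk {R : realType} {X Y : finType} (eps delta : R)
  (mX : X -> X -> R) (nuX : X -> R) (mY : Y -> Y -> R) (nuY : Y -> R)
  (C : X -> Y -> R) (k : nat) : R :=
  dW eps nuX nuY (Citer eps delta mX mY C k).

Definition maxnorm {R : realType} {X Y : finType} (C : X -> Y -> R) : R :=
  \big[Num.max/0]_(p : X * Y) `|C p.1 p.2|.

From HB Require Import structures.
From mathcomp Require Import all_boot all_order all_algebra.
From mathcomp Require Import all_classical all_reals all_analysis.
From mathcomp Require Import ring lra.
Import Order.TTheory GRing.Theory Num.Theory numFieldNormedType.Exports.
Set Implicit Arguments. Unset Strict Implicit. Unset Printing Implicit Defensive.
Local Open Scope ring_scope.
Local Open Scope classical_set_scope.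

(* Entropic optimal transport between fixed marginals is 1-Lipschitz in the cost
   for the entrywise max norm, since every cost is evaluated on the same set of
   couplings.  Hence the WL map is a (1 - delta)-contraction and the iterates
   C^(k) converge geometrically to its unique fixed point.  The first step moves
   C by at most (1 - delta) (2 ||C|| + eps log (nm)), because by Gibbs'
   inequality the entropy term of any coupling lies in [- log (nm), 0]; summing
   the geometric series and applying the Lipschitz bound once more to the outer
   transport problem gives the rate for d^(k). *)

Section geometric_bounds.
Variables (R : realType) (c : R).
Hypotheses (c_ge0 : 0 <= c) (c_lt1 : c < 1).

Lemma cvg_expr_scaled (K : R) : c ^+ n * K @[n --> \oo] --> 0.
Proof.
under eq_fun => n do rewrite mulrC.
by apply: cvg_geometric; rewrite ger0_norm.
Qed.

Lemma geometric_bound_eq0 (K x : R) : (forall k, `|x| <= c ^+ k * K) -> x = 0.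
Proof.
move=> xK; apply/normr0_eq0/le_anti; rewrite normr_ge0 andbT.
by apply: cvgr_to_ge (cvg_expr_scaled K) _; apply: nearW.
Qed.

Section increments.
Variables (u : R^nat) (B : R).
Hypothesis u_incr : forall k, `|u k.+1 - u k| <= c ^+ k * B.

Let B_ge0 : 0 <= B.
Proof. by have := u_incr 0; rewrite expr0 mul1r; apply: le_trans. Qed.

Lemma geometric_increments_dist k n : `|u (k + n)%N - u k| <= c ^+ k * B / (1 - c).
Proof.
have c1 : 1 - c != 0 by rewrite subr_eq0 gt_eqF.
suff : `|u (k + n)%N - u k| <= c ^+ k * (1 - c ^+ n) * B / (1 - c).
  move/le_trans; apply; rewrite ler_pM2r ?invr_gt0 ?subr_gt0 //.
  by rewrite -mulrA ler_wpM2l ?exprn_ge0 // ler_piMl // lerBlDr lerDl exprn_ge0.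
elim: n => [|n IHn]; first by rewrite addn0 subrr normr0 expr0 subrr mulr0 !mul0r.
rewrite addnS; apply: le_trans (ler_distD (u (k + n)%N) _ _) _.
apply: le_trans (lerD (u_incr (k + n)) IHn) _; rewrite exprD exprS.
have -> : c ^+ k * c ^+ n * B + c ^+ k * (1 - c ^+ n) * B / (1 - c) =
  c ^+ k * (1 - c * c ^+ n) * B / (1 - c) by field.
by [].
Qed.

Lemma geometric_increments_cvg : cvgn u.
Proof.
apply/cauchy_cvgP/cauchy_exP => e e_gt0.
have [N _ smallN] := cvgr_lt _ (cvg_expr_scaled (B / (1 - c))) _ e_gt0.
exists (u N); exists N => // n /= /subnKC <-; rewrite -ball_normE /= distrC.
apply: le_lt_trans (geometric_increments_dist _ _) _.
by rewrite -mulrA; apply: smallN => /=.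
Qed.

Lemma geometric_increments_lim_dist k : `|u k - limn u| <= c ^+ k * B / (1 - c).
Proof.
have u_cvg : `|u k - u n| @[n --> \oo] --> `|u k - limn u|.
  apply: cvg_norm; apply: (@cvgB _ _ _ _ _ (cst (u k)) u); first exact: cvg_cst.
  exact: geometric_increments_cvg.
apply: cvgr_to_le u_cvg _; exists k => // n /= /subnKC <-.
by rewrite distrC geometric_increments_dist.
Qed.

End increments.
End geometric_bounds.

Section xlogx_bounds.
Variable R : realType.

Lemma xlogx_le0 (t : R) : 0 <= t -> t <= 1 -> xlogx t <= 0.
Proof.
by move=> t_ge0 t_le1; rewrite /xlogx; case: eqP => // _; rewrite mulr_ge0_le0 // ln_le0.
Qed.

(* The tangent line of t |-> t ln (t N) at t = 1/N. *)
Lemma xlogx_ge_tangent (t N : R) : 0 <= t -> 0 < N -> t - N^-1 <= xlogx t + t * ln N.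
Proof.
move=> t_ge0 N_gt0; rewrite /xlogx; case: eqP => [->|/eqP t_neq0].
  by rewrite mul0r !add0r lerNl oppr0 invr_ge0 ltW.
have t_gt0 : 0 < t by rewrite lt_neqAle eq_sym t_neq0.
have tN_gt0 : 0 < t * N by rewrite mulr_gt0.
have ln_inv : ln (t * N)^-1 <= (t * N)^-1 - 1.
  have := @le_ln1Dx R ((t * N)^-1 - 1); rewrite addrCA subrr addr0; apply.
  by rewrite ltrBrDl subrr invr_gt0.
rewrite -mulrDr -lnM ?posrE //.
have := ler_wpM2l t_ge0 ln_inv.
rewrite lnV ?posrE // mulrN invfM mulrBr mulr1 mulrA mulfV ?mul1r //; lra.
Qed.

End xlogx_bounds.

Lemma ler_sum_term (R : numDomainType) (I : finType) (F : I -> R) i :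
  (forall j, 0 <= F j) -> F i <= \sum_j F j.
Proof. by move=> F_ge0; rewrite (bigD1 i) //= lerDl sumr_ge0. Qed.

Lemma prob_vec_card_gt0 (R : realType) (T : finType) (a : T -> R) :
  prob_vec a -> (0 < #|T|)%N.
Proof.
move=> [_ a_sum1]; rewrite lt0n; apply/eqP => /card0_eq T_empty; move: a_sum1.
rewrite big_pred0 => [/eqP|x]; first by rewrite eq_sym oner_eq0.
by move: (T_empty x); rewrite !inE.
Qed.

Lemma card_prod_ge1 (R : realType) (X Y : finType) (a : X -> R) (b : Y -> R) :
  prob_vec a -> prob_vec b -> 1 <= #|X|%:R * #|Y|%:R :> R.
Proof.
by move=> /prob_vec_card_gt0 X_gt0 /prob_vec_card_gt0 Y_gt0; rewrite -natrM ler1n muln_gt0 X_gt0.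
Qed.

Lemma maxnorm_ge (R : realType) (X Y : finType) (D : X -> Y -> R) x y :
  `|D x y| <= maxnorm D.
Proof. by rewrite /maxnorm (bigD1 (x, y)) //= le_max lexx. Qed.

Definition transport_cost {R : realType} {X Y : finType} (D P : X -> Y -> R) : R :=
  \sum_x \sum_y P x y * D x y.

Definition neg_entropy {R : realType} {X Y : finType} (P : X -> Y -> R) : R :=
  \sum_x \sum_y xlogx (P x y).

Lemma ot_objE (R : realType) (X Y : finType) (eps : R) (D P : X -> Y -> R) :
  ot_obj eps D P = transport_cost D P + eps * neg_entropy P.
Proof.
rewrite /ot_obj mulr_sumr -big_split; apply: eq_bigr => x _ /=.
by rewrite mulr_sumr -big_split.
Qed.

Lemma product_coupling (R : realType) (X Y : finType) (a : X -> R) (b : Y -> R) :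
  prob_vec a -> prob_vec b -> coupling a b (fun x y => a x * b y).
Proof.
move=> [a_ge0 a_sum1] [b_ge0 b_sum1]; split; first by move=> x y; rewrite mulr_ge0.
by split=> [x|y]; rewrite -?mulr_sumr -?mulr_suml ?b_sum1 ?a_sum1 ?mulr1 ?mul1r.
Qed.

Section coupling_bounds.
Variables (R : realType) (X Y : finType) (a : X -> R) (b : Y -> R) (P : X -> Y -> R).
Hypotheses (a_prob : prob_vec a) (b_prob : prob_vec b) (P_coupling : coupling a b P).

Implicit Types (D : X -> Y -> R) (e M : R).

Local Notation nm := (#|X|%:R * #|Y|%:R : R).

Lemma coupling_ge0 x y : 0 <= P x y.
Proof. by case: P_coupling. Qed.

Lemma coupling_mass : \sum_x \sum_y P x y = 1.
Proof. by case: a_prob P_coupling => _ <- [_ [P_a _]]; apply: eq_bigr => x _. Qed.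

Lemma coupling_le1 x y : P x y <= 1.
Proof.
case: a_prob P_coupling => a_ge0 <- [P_ge0 [P_a _]].
by apply: le_trans (ler_sum_term x a_ge0); rewrite -P_a ler_sum_term.
Qed.

Lemma ler_transport_cost D D' :
  (forall x y, D x y <= D' x y) -> transport_cost D P <= transport_cost D' P.
Proof.
by move=> D_le; apply: ler_sum => x _; apply: ler_sum => y _; rewrite ler_wpM2l ?coupling_ge0.
Qed.

Lemma transport_cost_cst e : transport_cost (fun _ _ => e) P = e.
Proof.
rewrite /transport_cost -[RHS]mul1r -coupling_mass mulr_suml.
by apply: eq_bigr => x _; rewrite mulr_suml.
Qed.

Lemma transport_cost_addr D e :
  transport_cost (fun x y => D x y + e) P = transport_cost D P + e.
Proof.
rewrite -[in RHS](transport_cost_cst e) -big_split; apply: eq_bigr => x _ /=.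
by rewrite -big_split; apply: eq_bigr => y _; rewrite mulrDr.
Qed.

Lemma neg_entropy_le0 : neg_entropy P <= 0.
Proof.
by apply: sumr_le0 => x _; apply: sumr_le0 => y _; rewrite xlogx_le0 ?coupling_ge0 ?coupling_le1.
Qed.

(* Gibbs' inequality against the uniform distribution on X * Y. *)
Lemma neg_entropy_ge : - ln nm <= neg_entropy P.
Proof.
have nm_gt0 : 0 < nm := lt_le_trans ltr01 (card_prod_ge1 a_prob b_prob).
have tangent : \sum_x \sum_y (P x y - nm^-1) <= \sum_x \sum_y (xlogx (P x y) + P x y * ln nm).
  by apply: ler_sum => x _; apply: ler_sum => y _; rewrite xlogx_ge_tangent ?coupling_ge0.
have lhsE : \sum_x \sum_y (P x y - nm^-1) = 0.
  under eq_bigr => x _ do rewrite sumrB sumr_const.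
  rewrite sumrB coupling_mass sumr_const -mulrnA mulnC -[_ *+ _]mulr_natr natrM.
  by rewrite mulVf ?gt_eqF // subrr.
have rhsE : \sum_x \sum_y (xlogx (P x y) + P x y * ln nm) = neg_entropy P + ln nm.
  under eq_bigr => x _ do rewrite big_split -mulr_suml /=.
  by rewrite big_split -mulr_suml coupling_mass mul1r.
by move: tangent; rewrite lhsE rhsE; lra.
Qed.

Variables (eps : R).
Hypothesis eps_ge0 : 0 <= eps.

Lemma ot_obj_ge D M :
  (forall x y, `|D x y| <= M) -> - M - eps * ln nm <= ot_obj eps D P.
Proof.
move=> D_le; rewrite ot_objE lerD //.
  rewrite -[leLHS]transport_cost_cst ler_transport_cost // => x y.
  by have := D_le x y; rewrite ler_norml => /andP[].
by rewrite -mulrN ler_wpM2l // neg_entropy_ge.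
Qed.

Lemma ot_obj_le D M : (forall x y, `|D x y| <= M) -> ot_obj eps D P <= M.
Proof.
move=> D_le; rewrite ot_objE -[leRHS]addr0 lerD ?mulr_ge0_le0 ?neg_entropy_le0 //.
rewrite -[leRHS]transport_cost_cst ler_transport_cost // => x y.
by have := D_le x y; rewrite ler_norml => /andP[].
Qed.

Lemma ot_obj_le_shift D D' e :
  (forall x y, D x y <= D' x y + e) -> ot_obj eps D P <= ot_obj eps D' P + e.
Proof.
by move=> D_le; rewrite !ot_objE addrAC lerD2r -transport_cost_addr ler_transport_cost.
Qed.

End coupling_bounds.

Section entropic_wasserstein_bounds.
Variables (R : realType) (X Y : finType) (a : X -> R) (b : Y -> R) (eps : R).
Hypotheses (a_prob : prob_vec a) (b_prob : prob_vec b) (eps_ge0 : 0 <= eps).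
Implicit Types (D : X -> Y -> R) (e L M : R).

Local Notation nm := (#|X|%:R * #|Y|%:R : R).

Lemma dW_le_ot_obj D P : coupling a b P -> dW eps a b D <= ot_obj eps D P.
Proof.
move=> P_coupling; apply: ge_inf; last by exists P.
exists (- maxnorm D - eps * ln nm) => _ [Q [Q_coupling ->]].
by apply: (ot_obj_ge a_prob b_prob Q_coupling eps_ge0) => x y; apply: maxnorm_ge.
Qed.

Lemma dW_ge D L : (forall P, coupling a b P -> L <= ot_obj eps D P) -> L <= dW eps a b D.
Proof.
move=> L_le; apply: lb_le_inf => [|_ [P [P_coupling ->]]]; last exact: L_le.
exists (ot_obj eps D (fun x y => a x * b y)), (fun x y => a x * b y).
by split=> //; apply: product_coupling.
Qed.

Lemma dW_norm_le D M : (forall x y, `|D x y| <= M) -> `|dW eps a b D| <= M + eps * ln nm.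
Proof.
move=> D_le; rewrite ler_norml opprD dW_ge => [|P P_coupling]; last first.
  by apply: (ot_obj_ge a_prob b_prob P_coupling eps_ge0).
have prod_coupling := product_coupling a_prob b_prob.
apply: le_trans (dW_le_ot_obj D prod_coupling) _.
apply: le_trans (ot_obj_le a_prob prod_coupling eps_ge0 D_le) _.
by rewrite lerDl mulr_ge0 // ln_ge0 // (card_prod_ge1 a_prob b_prob).
Qed.

Lemma dW_le_shift D D' e :
  (forall x y, D x y <= D' x y + e) -> dW eps a b D <= dW eps a b D' + e.
Proof.
move=> D_le; rewrite -lerBlDr; apply: dW_ge => P P_coupling.
rewrite lerBlDr; apply: le_trans (dW_le_ot_obj D P_coupling) _.
exact: (ot_obj_le_shift a_prob P_coupling).
Qed.

Lemma dW_dist_le D D' e :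
  (forall x y, `|D x y - D' x y| <= e) -> `|dW eps a b D - dW eps a b D'| <= e.
Proof.
move=> D_near; rewrite ler_norml lerBlDr lerNl opprB lerBlDr.
rewrite !(addrC e); apply/andP; split; apply: dW_le_shift => x y;
  by move: (D_near x y); rewrite ler_norml; lra.
Qed.

End entropic_wasserstein_bounds.

Section wl_iteration.
Variables (R : realType) (X Y : finType) (mX : X -> X -> R) (mY : Y -> Y -> R).
Variables (C : X -> Y -> R) (delta eps : R).
Hypotheses (mX_kernel : markov_kernel mX) (mY_kernel : markov_kernel mY).
Hypotheses (delta_gt0 : 0 < delta) (delta_le1 : delta <= 1) (eps_ge0 : 0 <= eps).
Implicit Types D : X -> Y -> R.

Local Notation Phi := (WLmap eps delta mX mY C).
Local Notation C_ k := (Citer eps delta mX mY C k).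
Local Notation B := (2 * maxnorm C + eps * ln (#|X|%:R * #|Y|%:R)).

Let c_ge0 : 0 <= 1 - delta. Proof. by rewrite subr_ge0. Qed.
Let c_lt1 : 1 - delta < 1. Proof. by rewrite ltrBlDr ltrDl. Qed.

Lemma WLmap_dist_le D D' (e : R) : (forall x y, `|D x y - D' x y| <= e) ->
  forall i j, `|Phi D i j - Phi D' i j| <= (1 - delta) * e.
Proof.
move=> D_near i j; rewrite /WLmap opprD addrACA subrr add0r -mulrBr normrM ger0_norm //.
by rewrite ler_wpM2l // dW_dist_le.
Qed.

Lemma Citer_succ_dist k i j : `|C_ k.+1 i j - C_ k i j| <= (1 - delta) ^+ k * B.
Proof.
elim: k i j => [|k IHk] i j; last by rewrite exprS -mulrA; apply: WLmap_dist_le IHk i j.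
have dW_le := dW_norm_le (mX_kernel i) (mY_kernel j) eps_ge0 (@maxnorm_ge _ _ _ C).
have ln_ge0 : 0 <= ln (#|X|%:R * #|Y|%:R : R).
  by rewrite ln_ge0 // (card_prod_ge1 (mX_kernel i) (mY_kernel j)).
have C_le := maxnorm_ge C i j.
rewrite expr0 mul1r /= /WLmap.
have -> : delta * C i j + (1 - delta) * dW eps (mX i) (mY j) C - C i j =
  (1 - delta) * (dW eps (mX i) (mY j) C - C i j) by ring.
rewrite normrM ger0_norm // -[leRHS]mul1r ler_pM ?(ltW c_lt1) //.
have := ler_normB (dW eps (mX i) (mY j) C) (C i j).
have := mulr_ge0 eps_ge0 ln_ge0; lra.
Qed.

Definition Citer_lim : X -> Y -> R := fun i j => limn (fun k => C_ k i j).

Lemma Citer_lim_dist k i j : `|C_ k i j - Citer_lim i j| <= (1 - delta) ^+ k / delta * B.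
Proof.
have := geometric_increments_lim_dist (u := fun k => C_ k i j) c_ge0 c_lt1
  (fun k => Citer_succ_dist k i j) k.
by rewrite subKr mulrAC.
Qed.

Lemma WLmap_fixpoint_unique D D' : Phi D = D -> Phi D' = D' -> D = D'.
Proof.
move=> D_fixed D'_fixed; apply/funext => i; apply/funext => j; apply/subr0_eq.
pose gap x y := D x y - D' x y.
apply: (geometric_bound_eq0 c_ge0 c_lt1 (K := maxnorm gap)) => k.
elim: k i j => [|k IHk] i j; first by rewrite expr0 mul1r (maxnorm_ge gap).
by rewrite -{1}D_fixed -{1}D'_fixed exprS -mulrA; apply: WLmap_dist_le IHk i j.
Qed.

Lemma Citer_lim_fixed : Phi Citer_lim = Citer_lim.
Proof.
apply/funext => i; apply/funext => j; apply/subr0_eq.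
apply: (geometric_bound_eq0 c_ge0 c_lt1 (K := 2 * ((1 - delta) / delta * B))) => k.
have C_k_near : forall x y, `|Citer_lim x y - C_ k x y| <= (1 - delta) ^+ k / delta * B.
  by move=> x y; rewrite distrC Citer_lim_dist.
have := WLmap_dist_le C_k_near i j; have := Citer_lim_dist k.+1 i j.
have -> : (1 - delta) ^+ k.+1 / delta * B = (1 - delta) * ((1 - delta) ^+ k / delta * B).
  by rewrite exprS; ring.
have -> : (1 - delta) ^+ k * (2 * ((1 - delta) / delta * B)) =
  2 * ((1 - delta) * ((1 - delta) ^+ k / delta * B)) by ring.
by have := ler_distD (Phi (C_ k) i j) (Phi Citer_lim i j) (Citer_lim i j); lra.
Qed.

Lemma dWLk_dist nuX nuY : prob_vec nuX -> prob_vec nuY -> forall k,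
  `|dWLk eps delta mX nuX mY nuY C k - dW eps nuX nuY Citer_lim|
    <= (1 - delta) ^+ k / delta * B.
Proof. by move=> nuX_prob nuY_prob k; apply: dW_dist_le => // x y; apply: Citer_lim_dist. Qed.

Lemma dWLk_cvg nuX nuY : prob_vec nuX -> prob_vec nuY ->
  dWLk eps delta mX nuX mY nuY C k @[k --> \oo] --> dW eps nuX nuY Citer_lim.
Proof.
move=> nuX_prob nuY_prob; apply/cvgrPdist_le => e e_gt0.
have [N _ smallN] := cvgr_lt _ (cvg_expr_scaled c_ge0 c_lt1 (delta^-1 * B)) _ e_gt0.
exists N => // n /smallN /ltW; apply: le_trans.
by rewrite distrC mulrA dWLk_dist.
Qed.

End wl_iteration.

Theorem proposition38 (R : realType) (X Y : finType)
  (mX : X -> X -> R) (nuX : X -> R) (mY : Y -> Y -> R) (nuY : Y -> R)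
  (C : X -> Y -> R) (delta eps : R) :
  markov_kernel mX -> prob_vec nuX ->
  markov_kernel mY -> prob_vec nuY ->
  (forall i j, 0 <= C i j) ->
  0 < delta -> delta <= 1 -> 0 <= eps ->
  exists Cinf : X -> Y -> R,
    WLmap eps delta mX mY C Cinf = Cinf /\
    (forall D, WLmap eps delta mX mY C D = D -> D = Cinf) /\
    (dWLk eps delta mX nuX mY nuY C k @[k --> \oo] --> dW eps nuX nuY Cinf) /\
    (forall k : nat,
      `|dWLk eps delta mX nuX mY nuY C k - dW eps nuX nuY Cinf|
        <= (1 - delta) ^+ k / delta
           * (2 * maxnorm C + eps * ln (#|X|%:R * #|Y|%:R))).
Proof.
move=> mX_kernel nuX_prob mY_kernel nuY_prob _ delta_gt0 delta_le1 eps_ge0.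
have Cinf_fixed := Citer_lim_fixed C mX_kernel mY_kernel delta_gt0 delta_le1 eps_ge0.
have fixpoint_unique :=
  WLmap_fixpoint_unique (C := C) mX_kernel mY_kernel delta_gt0 delta_le1 eps_ge0.
exists (Citer_lim mX mY C delta eps); do !split=> //.
- by move=> D D_fixed; apply: fixpoint_unique.
- exact: dWLk_cvg.
- exact: dWLk_dist.
Qed.
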